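(* In the setting below: (1) if $b_1,b_2$ are adjacent in $G$ via the edge $e$, then $\Delta(b_1,b_2)=-\nu(e)/\nu(e^+)$; (2) if $b_1,b_2$ are adjacent in $G^+$ via the edge $e$ (an edge of $G^+$, with dual $e^+$ in $G$), then $\Delta(b_1,b_2)=-\nu(e)/\nu(e^+)$; (3) if $d_{\overline G}(b_1,b_2)>2$ then $\Delta(b_1,b_2)=0$; (4) if $d_{\overline G}(b_1,b_2)=2$, $b_1\in V$ and $b_2\in V^+$, then $\Delta(b_1,b_2)=0$; (5) for every $b\in V$, $\Delta(b,b)=\sum_{e\in E:\,e\ni b}\nu(e)/\nu(e^+)$; (6) for every $b\in V^+$, $\Delta(b,b)=\sum_{e\in E^+:\,e\ni b}\nu(e)/\nu(e^+)$.
   Context: $G=(V,E)$ is an infinite connected graph properly embedded in the unit disk with every face bounded and finite, with weights $\nu>0$; $G^+=(V^+,E^+)$ is the dual with weights $\nu>0$; $e^+$ is the dual of $e$; each dual vertex lies inside its face, edges are Euclidean segments and each pair $e,e^+$ is perpendicular. $\overline G$: black vertices $V\cup V^+$, white vertices the crossing points $e\cap e^+$, adjacent to the endpoints of $e$ and $e^+$; $d_{\overline G}$ is graph distance in $\overline G$. $\overline\partial(u,v)=0$ unless adjacent; for adjacent white $w$ and black $b$, with $f$ the edge of $G$ or $G^+$ having endpoint $b$ and containing $w$, $\overline\partial(w,b)=\overline\partial(b,w)=\nu(f)\frac{b-w}{|b-w|}$. $\overline D=S\overline\partial S^*$ where $S$ is diagonal with $S(b,b)=1$ for black $b$ and $S(w,w)=(\nu(e)\nu(e^+))^{-1/2}$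 for $w=e\cap e^+$; $\Delta=\overline D^*\overline D$, considered on pairs of black vertices $b_1,b_2$. *)

From HB Require Import structures.
From mathcomp Require Import all_boot all_order all_algebra.
From mathcomp Require Import boolp classical_sets cardinality fsbigop.
From mathcomp.real_closed Require Import complex.
Set Implicit Arguments. Unset Strict Implicit. Unset Printing Implicit Defensive.
Import Order.TTheory GRing.Theory Num.Theory.
Local Open Scope ring_scope.
Local Open Scope classical_set_scope.
Local Open Scope complex_scope.

Fixpoint walk (T : Type) (adj : T -> T -> Prop) (n : nat) (x y : T) : Prop :=
  match n with
  | 0 => x = y
  | n'.+1 => exists z, adj x z /\ walk adj n' z y
  end.

Definition gdist_is (T : Type) (adj : T -> T -> Prop) (x y : T) (n : nat) : Prop :=
  walk adj n x y /\ forall m, (m < n)%N -> ~ walk adj m x y.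

(* The setting.  G = (V,E) with dual G^+ = (F,E^+); the dual edges are  *)
(* indexed by the same type E (e^+ is the dual of e).  Edge e of G goes *)
(* from [src e] to [tgt e]; the faces of G on its left/right (as seen   *)
(* along src -> tgt) are [lf e], [rf e]; e^+ joins [lf e] and [rf e].   *)
(* The embedding is recorded by the positions of V, F (= V^+) and the   *)
(* crossing points w(e) = e \cap e^+, together with the rotation system *)
(* (counterclockwise successor [rot] of darts around each vertex) that  *)
(* the embedding induces.  A dart is (e, true) = src->tgt or            *)
(* (e, false) = tgt->src.                                               *)

Record dual_setting (R : rcfType) := DualSetting {
  V : choiceType;
  F : choiceType;
  E : choiceType;
  src : E -> V; tgt : E -> V;
  lf : E -> F; rf : E -> F;
  nu : E -> R;
  nud : E -> R;            (* nu(e^+) *)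
  pV : V -> R[i]; pF : F -> R[i]; pW : E -> R[i];
  rot : E * bool -> E * bool;

  nu_gt0 : forall e, 0 < nu e;
  nud_gt0 : forall e, 0 < nud e;
  V_infinite : ~ finite_set [set: V];
  G_connected : forall u v : V, exists n,
      walk (fun a b => exists e, (src e = a /\ tgt e = b) \/ (src e = b /\ tgt e = a)) n u v;
  pV_disk : forall v, `|pV v| < 1;
  pF_disk : forall f, `|pF f| < 1;
  pV_inj : injective pV;
  pF_inj : injective pF;
  (* straight-line embeddings: no loops, no multiple edges in G and G^+ *)
  src_neq_tgt : forall e, src e <> tgt e;
  lf_neq_rf : forall e, lf e <> rf e;
  E_simple : forall e e', ((src e = src e' /\ tgt e = tgt e') \/
                           (src e = tgt e' /\ tgt e = src e')) -> e = e';
  Ed_simple : forall e e', ((lf e = lf e' /\ rf e = rf e') \/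
                            (lf e = rf e' /\ rf e = lf e')) -> e = e';
  deg_finite : forall v, finite_set [set e | src e = v \/ tgt e = v];
  face_finite : forall f, finite_set [set e | lf e = f \/ rf e = f];
  pW_on_e : forall e, exists t : R, 0 < t < 1 /\
      pW e = pV (src e) + t%:C * (pV (tgt e) - pV (src e));
  pW_on_ed : forall e, exists t : R, 0 < t < 1 /\
      pW e = pF (lf e) + t%:C * (pF (rf e) - pF (lf e));
  perp : forall e,
      Re ((pV (tgt e) - pV (src e)) * conjc (pF (rf e) - pF (lf e))) = 0;
  lf_left : forall e,
      0 < Im (conjc (pV (tgt e) - pV (src e)) * (pF (lf e) - pW e));
  (* rotation system: rot permutes the darts around each vertex, in a single
     (finite) cycle, and the face between a dart and its ccw successor is the
     face on the left of the former and on the right of the latter *)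
  rot_bij : bijective rot;
  rot_tail : forall d, (if d.2 then src d.1 else tgt d.1) =
                       (if (rot d).2 then src (rot d).1 else tgt (rot d).1);
  rot_cycle : forall d d', (if d.2 then src d.1 else tgt d.1) =
                           (if d'.2 then src d'.1 else tgt d'.1) ->
                           exists n, iter n rot d = d';
  rot_face : forall d, (if d.2 then lf d.1 else rf d.1) =
                       (if (rot d).2 then rf (rot d).1 else lf (rot d).1)
}.

Section Operators.
Variables (R : rcfType) (G : dual_setting R).

(* vertices of \overline G: black = inl (V + F), white = inr e (the point e \cap e^+) *)
Definition GbarV : choiceType := ((V G + F G) + E G)%type.

Definition wb_adj (e : E G) (b : V G + F G) : Prop :=
  match b with
  | inl v => v = src e \/ v = tgt e
  | inr f => f = lf e \/ f = rf e
  end.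

Definition Gbar_adj (x y : GbarV) : Prop :=
  match x, y with
  | inl b, inr e => wb_adj e b
  | inr e, inl b => wb_adj e b
  | _, _ => False
  end.

Definition posB (b : V G + F G) : R[i] :=
  match b with inl v => pV v | inr f => pF f end.

(* weight of the edge f of G or G^+ having endpoint b and containing w(e) *)
Definition wt (e : E G) (b : V G + F G) : R :=
  match b with inl _ => nu e | inr _ => nud e end.

Definition dbar_wb (e : E G) (b : V G + F G) : R[i] :=
  if `[< wb_adj e b >] then
    (wt e b)%:C * ((posB b - pW e) / `|posB b - pW e|)
  else 0.

Definition dbar (x y : GbarV) : R[i] :=
  match x, y with
  | inr e, inl b => dbar_wb e b
  | inl b, inr e => dbar_wb e b
  | _, _ => 0
  end.

Definition Sdiag (x : GbarV) : R[i] :=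
  match x with
  | inl _ => 1
  | inr e => ((Num.sqrt (nu e * nud e))^-1)%:C
  end.

Definition Dbar (x y : GbarV) : R[i] := Sdiag x * dbar x y * conjc (Sdiag y).

(* Delta = \overline D^* \overline D; the sum over all vertices of \overline G
   has finite support (fsbig) for black arguments *)
Definition Delta (x y : GbarV) : R[i] :=
  \sum_(u \in [set: GbarV]) (conjc (Dbar u x) * Dbar u y).

End Operators.

From Pilot Require Import Defs.
From mathcomp Require Import all_boot all_order all_algebra.
From mathcomp Require Import boolp classical_sets cardinality fsbigop functions.
From mathcomp.real_closed Require Import complex.
From mathcomp Require Import ring.
Set Implicit Arguments. Unset Strict Implicit. Unset Printing Implicit Defensive.
Import Order.TTheory GRing.Theory Num.Theory.
Local Open Scope ring_scope.
Local Open Scope classical_set_scope.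
Local Open Scope complex_scope.

(** Only the white vertices adjacent to both [b1] and [b2] contribute to
    [Delta b1 b2 = \sum_w conj (Dbar w b1) * Dbar w b2].  At [w = e \cap e^+] the
    contribution is a positive weight times the [unit_ratio] of the vectors from [w]
    to [b1] and to [b2], i.e. the quotient of their directions.  Since [w] is interior
    to both segments [e] and [e^+], which are perpendicular, this ratio is [1] when
    [b1 = b2], [-1] for the two endpoints of one segment, and [-i] or [i] for an
    endpoint [v] of [e] and an endpoint [f] of [e^+], according as [f] lies to the left
    or to the right of [e] seen from [v].  Around [v] faces and edges alternate, so the
    rotation at [v] pairs the edge having [f] on its left with the next one, having [f]
    on its right; their contributions cancel and [Delta v f = 0] for every [v] and [f]. *)

Section UnitRatio.
Variable R : rcfType.
Implicit Types (x y t : R) (a b p q w : R[i]).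

Definition unit_ratio a b : R[i] := conjc a * b / (`|a| * `|b|).

Lemma norm_real_complex x : `|x%:C| = `|x|%:C.
Proof. by rewrite normc_def /= expr0n addr0 sqrtr_sqr. Qed.

Lemma conjcM a b : conjc (a * b) = conjc a * conjc b.
Proof. exact: rmorphM. Qed.

Lemma conjc_norm a : conjc `|a| = `|a|.
Proof. by rewrite normc_def conjc_real. Qed.

Lemma unit_ratio_id a : a != 0 -> unit_ratio a a = 1.
Proof.
move=> a0; rewrite /unit_ratio -expr2 sqr_normc [conjc a * a]mulrC divff //.
by rewrite mulf_neq0 // conjc_eq0.
Qed.

Lemma unit_ratioZ x y a b : x != 0 -> y != 0 ->
  unit_ratio (x%:C * a) (y%:C * b) = (Num.sg (x * y))%:C * unit_ratio a b.
Proof.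
move=> x0 y0; rewrite /unit_ratio conjcM conjc_real !normrM !norm_real_complex.
have -> : Num.sg (x * y) = x * y / (`|x| * `|y|).
  by rewrite -normrM {2}[x * y]numEsg mulfK // normr_eq0 mulf_neq0.
have nx : (`|x|%:C : R[i]) != 0 by rewrite (inj_eq (@complexI _)) normr_eq0.
have ny : (`|y|%:C : R[i]) != 0 by rewrite (inj_eq (@complexI _)) normr_eq0.
by rewrite !rmorphM rmorphV ?unitfE ?mulf_neq0 ?normr_eq0 //= rmorphM /= !invfM; ring.
Qed.

Lemma unit_ratio_perp a b :
  'Re (conjc a * b) = 0 -> 'Im (conjc a * b) < 0 -> unit_ratio a b = - 'i.
Proof.
rewrite -complexRe -complexIm ltcR /unit_ratio -(normcJ a) -normrM.
case: (conjc a * b) => x y /= /complexI -> y_lt0.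
rewrite normc_def /= expr0n add0r sqrtr_sqr ltr0_norm //.
have -> : 0 +i* y = - 'i * (- y)%:C.
  apply/eqP; rewrite eq_complex /=.
  by rewrite !(oppr0, mul0r, mulr0, subr0, addr0, add0r, mulN1r, opprK) !eqxx.
by rewrite mulfK // (inj_eq (@complexI _)) oppr_eq0 ltr0_neq0.
Qed.

Lemma Im_real_complexM x a : complex.Im (x%:C * a) = x * complex.Im a.
Proof. by case: a => a1 a2 /=; rewrite mul0r addr0. Qed.

Lemma sg_interior t : 0 < t < 1 -> Num.sg (- t) = -1 /\ Num.sg (1 - t) = 1.
Proof.
by case/andP=> t0 t1; rewrite sgrN !gtr0_sg ?subr_gt0.
Qed.

Lemma sub_interior_point p q w t : w = p + t%:C * (q - p) ->
  p - w = (- t)%:C * (q - p) /\ q - w = (1 - t)%:C * (q - p).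
Proof. by move->; rewrite rmorphN rmorphB rmorph1; split; ring. Qed.

Lemma unit_ratio_crossing p q p' q' w t s :
    0 < t < 1 -> 0 < s < 1 ->
    w = p + t%:C * (q - p) -> w = p' + s%:C * (q' - p') ->
  let u := unit_ratio (q - p) (q' - p') in
  [/\ unit_ratio (p - w) (p' - w) = u, unit_ratio (p - w) (q' - w) = - u,
      unit_ratio (q - w) (p' - w) = - u & unit_ratio (q - w) (q' - w) = u].
Proof.
move=> t01 s01 /sub_interior_point[-> ->] /sub_interior_point[-> ->] u.
have [sNt sBt] := sg_interior t01; have [sNs sBs] := sg_interior s01.
rewrite !unit_ratioZ; try by rewrite -sgr_eq0 ?sNt ?sBt ?sNs ?sBs ?oppr_eq0 oner_eq0.
rewrite !sgrM sNt sBt sNs sBs ?(mulrNN, mulr1, mul1r, mulN1r) ?rmorphN rmorph1.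
by split; rewrite ?mulN1r.
Qed.

End UnitRatio.

Section DualSetting.
Variables (R : rcfType) (G : dual_setting R).
Implicit Types (e : E G) (v : V G) (f : F G) (b : V G + F G) (d : E G * bool).

Lemma nu_neq0 e : nu e != 0. Proof. by rewrite gt_eqF ?nu_gt0. Qed.
Lemma nud_neq0 e : nud e != 0. Proof. by rewrite gt_eqF ?nud_gt0. Qed.

Lemma unit_ratio_edge_dual e :
  unit_ratio (pV (tgt e) - pV (src e)) (pF (rf e) - pF (lf e)) = - 'i.
Proof.
apply: unit_ratio_perp; first by rewrite -[conjc _ * _]conjcK conjcM conjcK Re_conj perp.
have [s [/andP[s0 _] /sub_interior_point[pWl _]]] := pW_on_ed e.
have := lf_left e; rewrite pWl mulrCA -!complexIm !ltcR Im_real_complexM.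
by rewrite mulNr oppr_gt0 pmulr_rlt0.
Qed.

Lemma edge_vector_neq0 e : pV (tgt e) - pV (src e) != 0.
Proof. by rewrite subr_eq0; apply/eqP => /pV_inj /esym; apply: src_neq_tgt. Qed.

Lemma dual_edge_vector_neq0 e : pF (rf e) - pF (lf e) != 0.
Proof. by rewrite subr_eq0; apply/eqP => /pF_inj /esym; apply: lf_neq_rf. Qed.

Lemma unit_ratio_edge_ends e v1 v2 :
  (v1 = src e /\ v2 = tgt e) \/ (v1 = tgt e /\ v2 = src e) ->
  unit_ratio (pV v1 - pW e) (pV v2 - pW e) = -1.
Proof.
have [t [t01 pWe]] := pW_on_e e.
have [_ Epq Eqp _] := unit_ratio_crossing t01 t01 pWe pWe.
by case=> -[-> ->]; rewrite ?Epq ?Eqp unit_ratio_id ?edge_vector_neq0.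
Qed.

Lemma unit_ratio_dual_ends e f1 f2 :
  (f1 = lf e /\ f2 = rf e) \/ (f1 = rf e /\ f2 = lf e) ->
  unit_ratio (pF f1 - pW e) (pF f2 - pW e) = -1.
Proof.
have [t [t01 pWe]] := pW_on_ed e.
have [_ Epq Eqp _] := unit_ratio_crossing t01 t01 pWe pWe.
by case=> -[-> ->]; rewrite ?Epq ?Eqp unit_ratio_id ?dual_edge_vector_neq0.
Qed.

Lemma unit_ratio_end_id e b : wb_adj e b ->
  unit_ratio (posB b - pW e) (posB b - pW e) = 1.
Proof.
case: b => [v|f] /=.
  have [t [t01 pWe]] := pW_on_e e.
  have [Epp _ _ Eqq] := unit_ratio_crossing t01 t01 pWe pWe.
  by case=> ->; rewrite ?Epp ?Eqq unit_ratio_id ?edge_vector_neq0.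
have [t [t01 pWe]] := pW_on_ed e.
have [Epp _ _ Eqq] := unit_ratio_crossing t01 t01 pWe pWe.
by case=> ->; rewrite ?Epp ?Eqq unit_ratio_id ?dual_edge_vector_neq0.
Qed.

Definition dart_tail (d : E G * bool) : V G := if d.2 then src d.1 else tgt d.1.
Definition dart_left (d : E G * bool) : F G := if d.2 then lf d.1 else rf d.1.
Definition dart_right (d : E G * bool) : F G := if d.2 then rf d.1 else lf d.1.
Definition dart_from v e : E G * bool := (e, src e == v).

Lemma dart_fromK v d : dart_tail d = v -> dart_from v d.1 = d.
Proof.
case: d => e [] /= <-; rewrite /dart_from /= ?eqxx //.
by case: eqP => // /src_neq_tgt.
Qed.

Lemma dart_tail_from v e : src e = v \/ tgt e = v -> dart_tail (dart_from v e) = v.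
Proof. by rewrite /dart_tail /dart_from /=; case: eqP => // sv [/sv|]. Qed.

Lemma dart_tail_adj v d : dart_tail d = v -> src d.1 = v \/ tgt d.1 = v.
Proof. by case: d => e [] <-; [left|right]. Qed.

Lemma dart_left_neq_right d : dart_left d <> dart_right d.
Proof.
case: d => e []; rewrite /dart_left /dart_right /=; first exact: lf_neq_rf.
by move/esym; apply: lf_neq_rf.
Qed.

Lemma dart_faceP f d : dart_left d = f \/ dart_right d = f <-> lf d.1 = f \/ rf d.1 = f.
Proof. by case: d => e [] /=; rewrite /dart_left /dart_right /=; tauto. Qed.

Lemma dart_tail_rot d : dart_tail (Defs.rot d) = dart_tail d.
Proof. exact/esym/rot_tail. Qed.

Lemma dart_right_rot d : dart_right (Defs.rot d) = dart_left d.
Proof. exact/esym/rot_face. Qed.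

Lemma unit_ratio_corner e v f : src e = v \/ tgt e = v -> lf e = f \/ rf e = f ->
  unit_ratio (pV v - pW e) (pF f - pW e) =
  if dart_left (dart_from v e) == f then - 'i else 'i.
Proof.
have [t [t01 pWe]] := pW_on_e e; have [s [s01 pWed]] := pW_on_ed e.
have [Esl Esr Etl Etr] := unit_ratio_crossing t01 s01 pWe pWed.
have lr : lf e == rf e = false by apply/eqP/lf_neq_rf.
rewrite /dart_left /dart_from /=; have [<- _|sv [/eqP|<-]] := eqVneq (src e) v.
- by case=> <-; rewrite ?Esl ?Esr unit_ratio_edge_dual ?opprK ?eqxx ?lr.
- by rewrite (negbTE sv).
- by case=> <-; rewrite ?Etl ?Etr unit_ratio_edge_dual ?opprK ?eqxx // eq_sym lr.
Qed.

Definition Delta_term e b1 b2 : R[i] :=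
  conjc (Dbar (inr e : GbarV G) (inl b1)) * Dbar (inr e : GbarV G) (inl b2).

Lemma Delta_term_out e b1 b2 : ~ (wb_adj e b1 /\ wb_adj e b2) -> Delta_term e b1 b2 = 0.
Proof.
rewrite /Delta_term /Dbar /= /dbar_wb.
case: (pselect (wb_adj e b1)) => a1; last by rewrite asboolF // !(mulr0, mul0r, conjc0).
case: (pselect (wb_adj e b2)) => a2; last by rewrite (asboolF a2) !(mulr0, mul0r).
by case.
Qed.

Lemma Delta_term_val e b1 b2 : wb_adj e b1 -> wb_adj e b2 ->
  Delta_term e b1 b2 = ((wt e b1 * wt e b2) / (nu e * nud e))%:C *
                       unit_ratio (posB b1 - pW e) (posB b2 - pW e).
Proof.
move=> a1 a2; rewrite /Delta_term /Dbar; cbn [dbar Sdiag].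
rewrite /dbar_wb !asboolT // conjc1 !mulr1 /unit_ratio.
rewrite !conjcM !conjc_real conjc_inv conjc_norm.
have nunud_ge0 : 0 <= nu e * nud e by rewrite mulr_ge0 // ltW ?nu_gt0 ?nud_gt0.
have -> : wt e b1 * wt e b2 / (nu e * nud e) = wt e b1 * wt e b2 *
    ((Num.sqrt (nu e * nud e))^-1 * (Num.sqrt (nu e * nud e))^-1).
  by rewrite -invfM -expr2 sqr_sqrtr.
by rewrite !rmorphM /= invfM; ring.
Qed.

Lemma Delta_fsbig b1 b2 (S : set (E G)) :
  (forall e, wb_adj e b1 -> wb_adj e b2 -> S e) ->
  Delta (inl b1 : GbarV G) (inl b2) = \sum_(e \in S) Delta_term e b1 b2.
Proof.
move=> supp; rewrite /Delta -(fsbig_widen (inr @` S)) //.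
  by rewrite fsbig_image // => x y _ _ [].
move=> [b|e] [_ notS] /=; first by rewrite /Dbar /= !(mulr0, mul0r).
by apply: Delta_term_out => -[a1 a2]; apply: notS; exists e => //; apply: supp.
Qed.

Lemma Delta_far b1 b2 :
  (forall n, gdist_is (@Gbar_adj R G) (inl b1) (inl b2) n -> (2 < n)%N) ->
  Delta (inl b1 : GbarV G) (inl b2) = 0.
Proof.
move=> far; rewrite (@Delta_fsbig _ _ set0) ?fsbig_set0 // => e a1 a2.
have walk2 : walk (@Gbar_adj R G) 2 (inl b1) (inl b2).
  by exists (inr e); split => //; exists (inl b2).
have [b12|b12] := pselect (b1 = b2).
  by subst b2; suff : (2 < 0)%N by []; apply: far; split.
suff : (2 < 2)%N by rewrite ltnn.
apply: far; split => // -[|[|m]] // _ /=; first by move=> [].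
by case=> z [+ ez]; rewrite ez.
Qed.

Lemma edge_of_ends e e' v1 v2 :
  (v1 = src e /\ v2 = tgt e) \/ (v1 = tgt e /\ v2 = src e) ->
  wb_adj e' (inl v1) -> wb_adj e' (inl v2) -> e' = e.
Proof.
move=> ends a1 a2; have ne := src_neq_tgt (e := e); have ne' := src_neq_tgt (e := e').
apply/esym/E_simple; case: ends a1 a2 => -[-> ->] [s1|s1] [s2|s2];
  by [left | right | exfalso; congruence].
Qed.

Lemma dual_edge_of_ends e e' f1 f2 :
  (f1 = lf e /\ f2 = rf e) \/ (f1 = rf e /\ f2 = lf e) ->
  wb_adj e' (inr f1) -> wb_adj e' (inr f2) -> e' = e.
Proof.
move=> ends a1 a2; have ne := lf_neq_rf (e := e); have ne' := lf_neq_rf (e := e').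
apply/esym/Ed_simple; case: ends a1 a2 => -[-> ->] [s1|s1] [s2|s2];
  by [left | right | exfalso; congruence].
Qed.

Lemma Delta_edge e v1 v2 :
  (v1 = src e /\ v2 = tgt e) \/ (v1 = tgt e /\ v2 = src e) ->
  Delta (inl (inl v1) : GbarV G) (inl (inl v2)) = - (nu e / nud e)%:C.
Proof.
move=> ends; rewrite (@Delta_fsbig _ _ [set e]) => [|e']; last exact: edge_of_ends.
rewrite fsbig_set1 Delta_term_val /=; last 2 first.
- by case: ends => -[-> _]; [left|right].
- by case: ends => -[_ ->]; [right|left].
rewrite unit_ratio_edge_ends // mulrN1; congr (- _%:C).
by field; rewrite nu_neq0 nud_neq0.
Qed.

Lemma Delta_dual_edge e f1 f2 :
  (f1 = lf e /\ f2 = rf e) \/ (f1 = rf e /\ f2 = lf e) ->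
  Delta (inl (inr f1) : GbarV G) (inl (inr f2)) = - (nud e / nu e)%:C.
Proof.
move=> ends; rewrite (@Delta_fsbig _ _ [set e]) => [|e']; last exact: dual_edge_of_ends.
rewrite fsbig_set1 Delta_term_val /=; last 2 first.
- by case: ends => -[-> _]; [left|right].
- by case: ends => -[_ ->]; [right|left].
rewrite unit_ratio_dual_ends // mulrN1; congr (- _%:C).
by field; rewrite nu_neq0 nud_neq0.
Qed.

Lemma Delta_diag b :
  Delta (inl b : GbarV G) (inl b) =
  \sum_(e \in [set e | wb_adj e b]) ((wt e b)^+2 / (nu e * nud e))%:C.
Proof.
rewrite (@Delta_fsbig _ _ [set e | wb_adj e b]) //.
apply: eq_fsbigr => e; rewrite inE => adj.
by rewrite Delta_term_val // unit_ratio_end_id // mulr1 expr2.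
Qed.

Lemma Delta_vertex_diag v :
  Delta (inl (inl v) : GbarV G) (inl (inl v)) =
  \sum_(e \in [set e | src e = v \/ tgt e = v]) (nu e / nud e)%:C.
Proof.
rewrite Delta_diag (_ : [set e | wb_adj e _] = [set e | src e = v \/ tgt e = v]).
  by apply: eq_fsbigr => e _ /=; congr _%:C; field; rewrite nu_neq0 nud_neq0.
by apply/seteqP; split=> e /= [] ->; by [left | right].
Qed.

Lemma Delta_face_diag f :
  Delta (inl (inr f) : GbarV G) (inl (inr f)) =
  \sum_(e \in [set e | lf e = f \/ rf e = f]) (nud e / nu e)%:C.
Proof.
rewrite Delta_diag (_ : [set e | wb_adj e _] = [set e | lf e = f \/ rf e = f]).
  by apply: eq_fsbigr => e _ /=; congr _%:C; field; rewrite nu_neq0 nud_neq0.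
by apply/seteqP; split=> e /= [] ->; by [left | right].
Qed.

Definition corner_left v f : set (E G) :=
  [set e | (src e = v \/ tgt e = v) /\ dart_left (dart_from v e) = f].
Definition corner_right v f : set (E G) :=
  [set e | (src e = v \/ tgt e = v) /\ dart_right (dart_from v e) = f].

Lemma cornerP v f e : (corner_left v f `|` corner_right v f) e <->
  (src e = v \/ tgt e = v) /\ (lf e = f \/ rf e = f).
Proof.
have := dart_faceP f (dart_from v e); rewrite /corner_left /corner_right /=; tauto.
Qed.

Lemma Delta_term_corner v f e : (corner_left v f `|` corner_right v f) e ->
  Delta_term e (inl v) (inr f) = if dart_left (dart_from v e) == f then - 'i else 'i.
Proof.
case/cornerP=> ve fe; rewrite Delta_term_val /=; last 2 first.
- by case: ve => ->; [left | right].
- by case: fe => ->; [left | right].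
by rewrite divff ?mulf_neq0 ?nu_neq0 ?nud_neq0 // mul1r unit_ratio_corner.
Qed.

Lemma rot_corner_bij v f :
  set_bij (corner_left v f) (corner_right v f) (fun e => (Defs.rot (dart_from v e)).1).
Proof.
have [rot_inv rotK rot_invK] := @rot_bij _ G.
have tail_rot e : src e = v \/ tgt e = v -> dart_tail (Defs.rot (dart_from v e)) = v.
  by move=> ve; rewrite dart_tail_rot dart_tail_from.
split.
- move=> e [ve le]; have tv := tail_rot e ve.
  by split; [apply: dart_tail_adj tv | rewrite dart_fromK // dart_right_rot].
- move=> e1 e2; rewrite !inE => -[v1 _] [v2 _] /= eq_rot.
  have : Defs.rot (dart_from v e1) = Defs.rot (dart_from v e2).
    by rewrite -(dart_fromK (tail_rot e1 v1)) -(dart_fromK (tail_rot e2 v2)) eq_rot.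
  by move/(can_inj rotK)/(congr1 fst).
- move=> e' [ve' re']; set d := rot_inv (dart_from v e').
  have td : dart_tail d = v by rewrite -dart_tail_rot /d rot_invK dart_tail_from.
  exists d.1; last by rewrite dart_fromK // /d rot_invK.
  by split; [apply: dart_tail_adj td | rewrite dart_fromK // -dart_right_rot /d rot_invK].
Qed.

Lemma Delta_vertex_face v f : Delta (inl (inl v) : GbarV G) (inl (inr f)) = 0.
Proof.
rewrite (@Delta_fsbig _ _ (corner_left v f `|` corner_right v f)); last first.
  by move=> e ve fe; apply/cornerP; split; [case: ve | case: fe] => ->; by [left | right].
have fin_corner (C : set (E G)) : C `<=` [set e | src e = v \/ tgt e = v] -> finite_set C.
  by move=> /sub_finite_set; apply; apply: deg_finite.
rewrite fsbigU; last 3 first.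
- by apply: fin_corner => e [].
- by apply: fin_corner => e [].
- by move=> e [[_ le] [_ re]]; case: (dart_left_neq_right (d := dart_from v e)); rewrite le re.
have [to_right _ _] := rot_corner_bij v f.
rewrite (reindex_fsbig _ _ _ _ (rot_corner_bij v f)) -fsbig_split; last first.
  by apply: fin_corner => e [].
apply: fsbig1 => e le; set e' := (Defs.rot (dart_from v e)).1.
have re : corner_right v f e' := to_right e le.
rewrite !Delta_term_corner; [|by right|by left].
rewrite (proj2 le) eqxx; case: eqP => [le'|_]; last exact: addNr.
by case: (dart_left_neq_right (d := dart_from v e')); rewrite le' (proj2 re).
Qed.

End DualSetting.

Theorem lemma4p7 (R : rcfType) (G : dual_setting R) :
  (* (1) b1, b2 adjacent in G via e *)
  (forall (e : E G) (v1 v2 : V G),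
      (v1 = src e /\ v2 = tgt e) \/ (v1 = tgt e /\ v2 = src e) ->
      Delta (inl (inl v1)) (inl (inl v2)) = - (nu e / nud e)%:C) /\
  (* (2) b1, b2 adjacent in G^+ via the dual edge e^+ (ratio nu(e^+)/nu(e)) *)
  (forall (e : E G) (f1 f2 : F G),
      (f1 = lf e /\ f2 = rf e) \/ (f1 = rf e /\ f2 = lf e) ->
      Delta (inl (inr f1)) (inl (inr f2)) = - (nud e / nu e)%:C) /\
  (* (3) d(b1,b2) > 2 *)
  (forall b1 b2 : V G + F G,
      (forall n, gdist_is (@Gbar_adj R G) (inl b1) (inl b2) n -> (2 < n)%N) ->
      Delta (inl b1) (inl b2) = 0) /\
  (* (4) d(b1,b2) = 2, b1 in V, b2 in V^+ *)
  (forall (v : V G) (f : F G),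
      gdist_is (@Gbar_adj R G) (inl (inl v)) (inl (inr f)) 2 ->
      Delta (inl (inl v)) (inl (inr f)) = 0) /\
  (* (5) diagonal, b in V *)
  (forall v : V G,
      Delta (inl (inl v)) (inl (inl v)) =
      \sum_(e \in [set e : E G | src e = v \/ tgt e = v]) (nu e / nud e)%:C) /\
  (* (6) diagonal, b in V^+ *)
  (forall f : F G,
      Delta (inl (inr f)) (inl (inr f)) =
      \sum_(e \in [set e : E G | lf e = f \/ rf e = f]) (nud e / nu e)%:C).
Proof.
split; first exact: Delta_edge.
split; first exact: Delta_dual_edge.
split; first exact: Delta_far.
split; first by move=> v f _; apply: Delta_vertex_face.
split; [exact: Delta_vertex_diag | exact: Delta_face_diag].
Qed.
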